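(* Let $N\ge 1$ and $M\ge 1$ be integers and let $\mathcal{N}=(p_1,\ldots,p_N)$ with $p_i>0$ and $\sum_{i=1}^N p_i=1$. Let $X_1,\ldots,X_M$ be independent random variables with values in $\bar N=\{1,\ldots,N\}$ and $\Pr(X_j=i)=p_i$, and let $\Pr(K\mid M,\mathcal{N})$ be the probability that exactly $K$ distinct values occur among $X_1,\ldots,X_M$. For $s\subseteq\bar N$ write $\Pr(s)=\sum_{i\in s}p_i$. Then for every real $t$, \[ \sum_{K=1}^{N}e^{Kt}\Pr(K\mid M,\mathcal{N})=\sum_{k=1}^{N}\ \sum_{\{s\subseteq\bar N:\ |s|=k\}}\Pr(s)^M\, e^{kt}\,(1-e^{t})^{N-k}. \]
   Context: The left-hand side is the moment-generating function of the type-token distribution $\Pr(K\mid M,\mathcal{N})$, $K=1,\ldots,N$. *)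

From HB Require Import structures.
From mathcomp Require Import all_boot all_order all_algebra.
From mathcomp Require Import all_classical all_reals all_analysis.
Set Implicit Arguments. Unset Strict Implicit. Unset Printing Implicit Defensive.
Import Order.TTheory GRing.Theory Num.Theory.
Local Open Scope ring_scope.

(* The index set {1,...,N} is modelled by 'I_N = {0,...,N-1}.
   X = (X_1,...,X_M) i.i.d. with law p is the product distribution on the
   finite sample space {ffun 'I_M -> 'I_N}: Pr(X = x) = \prod_j p (x j). *)
Definition sample_prob (R : ringType) (N M : nat) (p : 'I_N -> R)
  (x : {ffun 'I_M -> 'I_N}) : R := \prod_(j < M) p (x j).

Definition n_distinct (N M : nat) (x : {ffun 'I_M -> 'I_N}) : nat :=
  #|[set x j | j : 'I_M]|.

Definition type_token_prob (R : ringType) (N M : nat) (p : 'I_N -> R) (K : nat) : R :=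
  \sum_(x : {ffun 'I_M -> 'I_N} | n_distinct x == K) sample_prob p x.

Definition set_prob (R : ringType) (N : nat) (p : 'I_N -> R) (s : {set 'I_N}) : R :=
  \sum_(i in s) p i.
Arguments type_token_prob {R} N M p K.

From HB Require Import structures.
From mathcomp Require Import all_boot all_order all_algebra.
From mathcomp Require Import all_classical all_reals all_analysis.
Import Order.TTheory GRing.Theory Num.Theory.
Local Open Scope ring_scope.

(* Write y = e^t.  Pr(s)^M is the probability that every X_j falls in s, so
   the right-hand side is the expectation of
   \sum_{s ⊇ T} y^|s| (1-y)^(N-|s|), where T is the set of observed values;
   expanding \prod_{i in T} y * \prod_{i notin T} (y + (1 - y)) shows that this
   sum is y^|T|, the integrand of the left-hand side. *)

Lemma sum_supersets_expr (R : comNzRingType) (I : finType) (T : {set I}) (y : R) :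
  \sum_(S : {set I} | T \subset S) y ^+ #|S| * (1 - y) ^+ #|~: S| = y ^+ #|T|.
Proof.
(* Expanding \prod_i (y + G i) over subsets yields exactly the summands. *)
pose G i := if i \in T then 0 else 1 - y.
have prod_term (S : {set I}) : \prod_i (if i \in S then y else G i)
    = (T \subset S)%:R * (y ^+ #|S| * (1 - y) ^+ #|~: S|).
  rewrite (bigID (mem S)) /= (eq_bigr (fun _ => y)); last by move=> i ->.
  rewrite prodr_const; have [TS | /fintype.subsetPn [i iT niS]] := boolP (T \subset S).
    rewrite mul1r (eq_bigr (fun _ => 1 - y)) ?prodr_const; last first.
      move=> i /negbTE niS; rewrite niS /G; case: ifP => // iT.
      by rewrite (fintype.subsetP TS _ iT) in niS.
    by congr (_ * _ ^+ _); apply: eq_card => i; rewrite !inE.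
  by rewrite (bigD1 i) //= (negbTE niS) /G iT !mul0r mulr0.
rewrite big_mkcond /=.
transitivity (\prod_i (y + G i)).
  rewrite bigA_distr; apply: eq_bigr => S _.
  by rewrite prod_term; case: (T \subset S); rewrite ?mul1r ?mul0r.
rewrite (bigID (mem T)) /= (eq_bigr (fun _ => y)) ?prodr_const.
  by rewrite big1 ?mulr1 // => i /negbTE niT; rewrite /G niT addrC subrK.
by move=> i iT; rewrite /G iT addr0.
Qed.

Lemma set_prob_expn (R : comNzRingType) (N M : nat) (p : 'I_N -> R) (S : {set 'I_N}) :
  set_prob p S ^+ M =
  \sum_(x : {ffun 'I_M -> 'I_N} | [set x j | j : 'I_M] \subset S) sample_prob p x.
Proof.
rewrite /set_prob -[in LHS](card_ord M) -prodr_const bigA_distr_big /=.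
apply: eq_bigl => x; rewrite sub_imset_pre.
apply/ffun_onP/fintype.subsetP => [xS j _ | xS j]; first by rewrite inE xS.
by have := xS j; rewrite !inE => ->.
Qed.

Lemma sum_fibers_nat (R : nmodType) (T : finType) (f : T -> nat) (F : T -> R) (m n : nat) :
  (forall x, ~~ (m <= f x < n)%N -> F x = 0) ->
  \sum_(m <= k < n) \sum_(x | f x == k) F x = \sum_x F x.
Proof.
move=> F0; under eq_bigr do rewrite big_mkcond.
rewrite exchange_big /=; apply: eq_bigr => x _.
have [fx_in | fx_out] := boolP (m <= f x < n)%N.
  rewrite (bigD1_seq (f x)) ?mem_index_iota ?iota_uniq //= eqxx big1 ?addr0 //.
  by move=> k /negbTE; rewrite eq_sym => ->.
by rewrite F0 // big1 // => k _; case: ifP.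
Qed.

Lemma sum_expr_n_distinct (R : comNzRingType) (N M : nat) (p : 'I_N -> R) (y : R) :
  \sum_(x : {ffun 'I_M -> 'I_N}) y ^+ n_distinct x * sample_prob p x =
  \sum_(S : {set 'I_N}) set_prob p S ^+ M * y ^+ #|S| * (1 - y) ^+ (N - #|S|).
Proof.
have cardC (S : {set 'I_N}) : #|~: S| = (N - #|S|)%N.
  by rewrite cardsCs finset.setCK card_ord.
under [RHS]eq_bigr => S _ do rewrite set_prob_expn -mulrA big_distrl big_mkcond /=.
rewrite exchange_big /=; apply: eq_bigr => x _.
rewrite -(@sum_supersets_expr R _ [set x j | j : 'I_M] y) mulr_suml big_mkcond /=.
apply: eq_bigr => S _; rewrite cardC.
by case: ifP; rewrite ?mul0r // mulrC.
Qed.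

Theorem lemma1 (R : realType) (N M : nat) (p : 'I_N -> R)
  (hN : (1 <= N)%N) (hM : (1 <= M)%N)
  (hpos : forall i, 0 < p i) (hsum : \sum_(i < N) p i = 1) (t : R) :
  \sum_(1 <= K < N.+1) expR (K%:R * t) * type_token_prob N M p K =
  \sum_(1 <= k < N.+1)
     \sum_(s : {set 'I_N} | #|s| == k)
        set_prob (R:=R) p s ^+ M * expR (k%:R * t) * (1 - expR t) ^+ (N - k).
Proof.
transitivity (\sum_(1 <= K < N.+1) \sum_(x : {ffun 'I_M -> 'I_N} | n_distinct x == K)
                expR t ^+ n_distinct x * sample_prob p x).
  apply: eq_bigr => K _; rewrite expRM_natl big_distrr /=.
  by apply: eq_bigr => x /eqP ->.
rewrite sum_fibers_nat ?sum_expr_n_distinct; last first.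
  move=> x; have := max_card [set x j | j : 'I_M]; rewrite card_ord /n_distinct ltnS => ->.
  rewrite andbT card_gt0.
  by case/negP; apply/set0Pn; exists (x (Ordinal hM)); apply: imset_f.
rewrite -(@sum_fibers_nat _ _ (fun S : {set 'I_N} => #|S|) _ 1 N.+1); last first.
  move=> S; have := max_card S; rewrite card_ord ltnS => ->.
  rewrite andbT -eqn0Ngt cards_eq0 => /eqP ->.
  by rewrite /set_prob big_set0 expr0n (gtn_eqF hM) !mul0r.
apply: eq_bigr => k _; apply: eq_bigr => S /eqP ->.
by rewrite expRM_natl.
Qed.
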